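(* Let $H$ be a complex Hilbert space, $\varphi,\psi:[0,1]\to\mathbb{R}$ continuous, and $A\in\mathbb{B}(H)$. Then the functions $t\mapsto\omega_t(\varphi,\psi;A)$ and $t\mapsto c_t(\varphi,\psi;A)$ are continuous on $[0,1]$.
   Context: $S_1(H)$ is the unit sphere of $H$; $\omega_t(\varphi,\psi;A)=\sup_{x\in S_1(H)}|\langle(\varphi(t)A+\psi(t)A^* )x,x\rangle|$ and $c_t(\varphi,\psi;A)=\inf_{x\in S_1(H)}|\langle(\varphi(t)A+\psi(t)A^* )x,x\rangle|$. *)

From HB Require Import structures.
From mathcomp Require Import all_boot all_order all_algebra.
From mathcomp Require Import all_classical all_reals all_analysis.
From mathcomp Require Import complex.
Set Implicit Arguments. Unset Strict Implicit. Unset Printing Implicit Defensive.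
Import Order.TTheory GRing.Theory Num.Theory.
Local Open Scope ring_scope.
Local Open Scope classical_set_scope.
Local Open Scope complex_scope.

Definition is_inner_product (R : realType) (V : lmodType R[i])
    (ip : V -> V -> R[i]) : Prop :=
  [/\ (forall (a : R[i]) (x y z : V), ip (a *: x + y) z = a * ip x z + ip y z),
      (forall x y : V, ip y x = (ip x y)^*),
      (forall x : V, 0 <= ip x x) &
      (forall x : V, ip x x = 0 -> x = 0)].

Definition ipnorm (R : realType) (V : lmodType R[i]) (ip : V -> V -> R[i])
    (x : V) : R := Num.sqrt (complex.Re (ip x x)).

Definition ip_complete (R : realType) (V : lmodType R[i])
    (ip : V -> V -> R[i]) : Prop :=
  forall u : nat -> V,
    (forall e : R, 0 < e -> exists N : nat, forall m n : nat,
        (N <= m)%N -> (N <= n)%N -> ipnorm ip (u m - u n) < e) ->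
    exists l : V, forall e : R, 0 < e -> exists N : nat, forall n : nat,
        (N <= n)%N -> ipnorm ip (u n - l) < e.

Definition is_hilbert (R : realType) (V : lmodType R[i])
    (ip : V -> V -> R[i]) : Prop :=
  is_inner_product ip /\ ip_complete ip.

Definition bounded_op (R : realType) (V : lmodType R[i])
    (ip : V -> V -> R[i]) (A : V -> V) : Prop :=
  linear A /\ exists M : R, forall x : V, ipnorm ip (A x) <= M * ipnorm ip x.

Definition is_adjoint (R : realType) (V : lmodType R[i])
    (ip : V -> V -> R[i]) (A Ad : V -> V) : Prop :=
  forall x y : V, ip (A x) y = ip x (Ad y).

Definition unit_sphere (R : realType) (V : lmodType R[i])
    (ip : V -> V -> R[i]) : set V := [set x | ipnorm ip x = 1].

Definition num_vals (R : realType) (V : lmodType R[i]) (ip : V -> V -> R[i])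
    (phi psi : R -> R) (A Ad : V -> V) (t : R) : set R :=
  [set complex.Re `|ip ((phi t)%:C *: A x + (psi t)%:C *: Ad x) x| |
     x in unit_sphere ip].

Definition omega_t (R : realType) (V : lmodType R[i]) (ip : V -> V -> R[i])
    (phi psi : R -> R) (A Ad : V -> V) (t : R) : R :=
  sup (num_vals ip phi psi A Ad t).

Definition c_t (R : realType) (V : lmodType R[i]) (ip : V -> V -> R[i])
    (phi psi : R -> R) (A Ad : V -> V) (t : R) : R :=
  inf (num_vals ip phi psi A Ad t).

(* For a unit vector x put a = <Ax, x>; then |a| <= ||A|| by Cauchy-Schwarz,
   and since <A^* x, x> = conj a the value at time t is
   |phi(t) a + psi(t) conj a|.  This depends on (phi(t), psi(t)) in a
   Lipschitz way, uniformly in x, so the sup and the inf over the unit sphere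
   inherit the same modulus of continuity from phi and psi. *)

From HB Require Import structures.
From mathcomp Require Import all_boot all_order all_algebra.
From mathcomp Require Import all_classical all_reals all_analysis.
From mathcomp Require Import complex.
From mathcomp Require Import ring lra.
Set Implicit Arguments.
Unset Strict Implicit.
Unset Printing Implicit Defensive.
Import Order.TTheory GRing.Theory Num.Theory.
Import numFieldNormedType.Exports.
Local Open Scope ring_scope.
Local Open Scope classical_set_scope.

Section InnerProduct.
Local Open Scope complex_scope.
Variables (R : realType) (V : lmodType R[i]) (ip : V -> V -> R[i]).
Hypothesis ipP : is_inner_product ip.

Lemma ip0l z : ip 0 z = 0.
Proof.
case: ipP => ip_lin _ _ _.
by have := ip_lin (-1) z z z; rewrite scaleN1r addNr mulN1r addNr.
Qed.

Lemma ipDl x y z : ip (x + y) z = ip x z + ip y z.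
Proof. by case: ipP => ip_lin _ _ _; rewrite -{1}[x]scale1r ip_lin mul1r. Qed.

Lemma ipZl a x z : ip (a *: x) z = a * ip x z.
Proof.
by case: ipP => ip_lin _ _ _; rewrite -[a *: x]addr0 ip_lin ip0l addr0.
Qed.

Lemma ipDr x y z : ip z (x + y) = ip z x + ip z y.
Proof. by case: ipP => _ ipC _ _; rewrite ipC ipDl rmorphD /= -!ipC. Qed.

Lemma ipZr a x z : ip z (a *: x) = a^* * ip z x.
Proof. by case: ipP => _ ipC _ _; rewrite ipC ipZl rmorphM /= -ipC. Qed.

Lemma ip_self x : ip x x = (ipnorm ip x ^+ 2)%:C.
Proof.
case: ipP => _ _ ip_ge0 _.
have := ip_ge0 x; rewrite lecE /ipnorm => /andP[/eqP Im0 Re0].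
by rewrite sqr_sqrtr //; move: Im0; case: (ip x x) => a b /= ->.
Qed.

Lemma cauchy_schwarz_unit x y : ipnorm ip x = 1 -> `|ip y x| ^+ 2 <= ip y y.
Proof.
move=> x1; have xx1 : ip x x = 1 by rewrite ip_self x1 expr1n.
case: ipP => _ ipC ip_ge0 _.
set c := ip y x; have yxC : ip x y = c^* by rewrite ipC.
have := ip_ge0 (y - c *: x).
have -> : ip (y - c *: x) (y - c *: x) = ip y y - c * c^*.
  by rewrite -scaleNr ipDl ipZl !ipDr !ipZr xx1 yxC rmorphN /= -/c; ring.
by rewrite subr_ge0 sqr_normc.
Qed.

Lemma ip_unit_le (B : V -> V) (M : R) x : ipnorm ip x = 1 ->
  ipnorm ip (B x) <= M * ipnorm ip x -> `|ip (B x) x| <= M%:C.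
Proof.
move=> x1; rewrite x1 mulr1 => BxM.
have Bx_ge0 : 0 <= ipnorm ip (B x) by exact: sqrtr_ge0.
have M0 : 0 <= M := le_trans Bx_ge0 BxM.
rewrite -ler_sqr ?nnegrE ?normr_ge0 ?ler0c //.
apply: le_trans (cauchy_schwarz_unit _ x1) _.
by rewrite ip_self -rmorphXn lecR ler_sqr ?nnegrE.
Qed.

Lemma ip_adjoint_combination (A Ad : V -> V) (p q : R[i]) x :
  is_adjoint ip A Ad ->
  ip (p *: A x + q *: Ad x) x = p * ip (A x) x + q * (ip (A x) x)^*.
Proof.
by case: ipP => _ ipC _ _ adj; rewrite ipDl !ipZl (ipC x (Ad x)) -adj.
Qed.

End InnerProduct.

Lemma bounded_op_nonneg (R : realType) (V : lmodType R[i]) (ip : V -> V -> R[i])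
    (A : V -> V) :
  bounded_op ip A ->
  exists2 M, 0 <= M & forall x, ipnorm ip (A x) <= M * ipnorm ip x.
Proof.
move=> [_ [M AM]]; exists `|M| => // x.
by apply: le_trans (AM x) _; rewrite ler_wpM2r ?ler_norm //; exact: sqrtr_ge0.
Qed.

Section ComplexNorm.
Local Open Scope complex_scope.
Variable R : realType.

Lemma Re_normrK (z : R[i]) : (complex.Re `|z|)%:C = `|z|.
Proof. exact/RRe_real/normr_real. Qed.

Lemma Re_normr_ge0 (z : R[i]) : 0 <= complex.Re `|z|.
Proof. by rewrite -ler0c Re_normrK. Qed.

Lemma normc_real (r : R) : `|r%:C| = `|r|%:C.
Proof. by rewrite normc_def /= expr0n /= addr0 sqrtr_sqr. Qed.

Lemma Re_normr_dist (z w : R[i]) :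
  `|complex.Re `|z| - complex.Re `|w| | <= complex.Re `|z - w|.
Proof.
by rewrite -lecR -normc_real rmorphB /= !Re_normrK; exact: ler_dist_dist.
Qed.

Lemma normr_combination_conj_le (p q : R) (a : R[i]) :
  `|p%:C * a + q%:C * a^*| <= (`|p| + `|q|)%:C * `|a|.
Proof.
apply: le_trans (ler_normD _ _) _.
by rewrite !normrM normcJ !normc_real rmorphD mulrDl.
Qed.

Lemma Re_normr_combination_conj_le (p q M : R) (a : R[i]) : `|a| <= M%:C ->
  complex.Re `|p%:C * a + q%:C * a^*| <= (`|p| + `|q|) * M.
Proof.
move=> aM; rewrite -lecR Re_normrK rmorphM.
apply: le_trans (normr_combination_conj_le p q a) _.
by rewrite ler_wpM2l // ler0c addr_ge0.
Qed.

Lemma Re_normr_combination_conj_dist (p1 q1 p2 q2 M : R) (a : R[i]) :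
  `|a| <= M%:C ->
  `|complex.Re `|p1%:C * a + q1%:C * a^*|
    - complex.Re `|p2%:C * a + q2%:C * a^*| |
    <= (`|p1 - p2| + `|q1 - q2|) * M.
Proof.
move=> aM; apply: le_trans (Re_normr_dist _ _) _.
have -> : p1%:C * a + q1%:C * a^* - (p2%:C * a + q2%:C * a^*)
          = (p1 - p2)%:C * a + (q1 - q2)%:C * a^*.
  by rewrite !rmorphB; ring.
exact: Re_normr_combination_conj_le.
Qed.

End ComplexNorm.

Section SupInfImage.
Variables (R : realType) (T : Type) (U : set T).

Lemma sup_image_leD {f g : T -> R} {d : R} : U !=set0 ->
  has_ubound (g @` U) -> (forall x, U x -> f x <= g x + d) ->
  sup (f @` U) <= sup (g @` U) + d.
Proof.
move=> [x0 Ux0] ub_g fg; apply: ge_sup; first by exists (f x0), x0.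
move=> _ [x Ux <-]; apply: le_trans (fg _ Ux) _.
by rewrite lerD2r; apply: ub_le_sup => //; exists x.
Qed.

Lemma inf_image_leD {f g : T -> R} {d : R} : U !=set0 ->
  has_lbound (f @` U) -> (forall x, U x -> f x <= g x + d) ->
  inf (f @` U) <= inf (g @` U) + d.
Proof.
move=> [x0 Ux0] lb_f fg; rewrite -lerBlDr; apply: lb_le_inf.
  by exists (g x0), x0.
move=> _ [x Ux <-]; rewrite lerBlDr; apply: le_trans (fg _ Ux).
by apply: ge_inf => //; exists x.
Qed.

Lemma sup_image_dist (f g : T -> R) (d : R) : 0 <= d ->
  has_ubound (f @` U) -> has_ubound (g @` U) ->
  (forall x, U x -> `|f x - g x| <= d) ->
  `|sup (f @` U) - sup (g @` U)| <= d.
Proof.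
move=> d0 ub_f ub_g fg.
have [->|/set0P U0] := eqVneq U set0; first by rewrite !image_set0 subrr normr0.
have fgd x : U x -> f x <= g x + d by move/fg/ler_distlDr.
have gfd x : U x -> g x <= f x + d by move/fg/ler_distlCDr.
have := sup_image_leD U0 ub_g fgd; have := sup_image_leD U0 ub_f gfd.
by rewrite ler_distl; lra.
Qed.

Lemma inf_image_dist (f g : T -> R) (d : R) : 0 <= d ->
  has_lbound (f @` U) -> has_lbound (g @` U) ->
  (forall x, U x -> `|f x - g x| <= d) ->
  `|inf (f @` U) - inf (g @` U)| <= d.
Proof.
move=> d0 lb_f lb_g fg.
have [->|/set0P U0] := eqVneq U set0; first by rewrite !image_set0 subrr normr0.
have fgd x : U x -> f x <= g x + d by move/fg/ler_distlDr.
have gfd x : U x -> g x <= f x + d by move/fg/ler_distlCDr.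
have := inf_image_leD U0 lb_f fgd; have := inf_image_leD U0 lb_g gfd.
by rewrite ler_distl; lra.
Qed.

End SupInfImage.

Lemma continuous_within_dist_le (R : realType) (T : topologicalType) (D : set T)
    (F phi psi : T -> R) (M : R) : 0 <= M ->
  (forall t s, `|F t - F s| <= (`|phi t - phi s| + `|psi t - psi s|) * M) ->
  {within D, continuous phi} -> {within D, continuous psi} ->
  {within D, continuous F}.
Proof.
move=> M0 FM cphi cpsi x; apply/cvgrPdist_le => e e0.
have M1 : 0 < 2 * M + 1 by rewrite ltr_wpDl ?mulr_ge0.
set k := e / (2 * M + 1); have k0 : 0 < k by rewrite divr_gt0.
have ek : e = k * (2 * M + 1) by rewrite divfK ?gt_eqF.
have /cvgrPdist_le/(_ k k0) phi_near := cphi x.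
have /cvgrPdist_le/(_ k k0) psi_near := cpsi x.
near=> t; apply: le_trans (FM x t) _.
have phik : `|phi x - phi t| <= k by near: t.
have psik : `|psi x - psi t| <= k by near: t.
have : (`|phi x - phi t| + `|psi x - psi t|) * M <= (k + k) * M.
  by rewrite ler_wpM2r // lerD.
by rewrite ek; nra.
Unshelve. all: by end_near.
Qed.

Section NumericalRangeValues.
Local Open Scope complex_scope.
Variables (R : realType) (V : lmodType R[i]) (ip : V -> V -> R[i]).
Variables (phi psi : R -> R) (A Ad : V -> V) (M : R).
Hypotheses (ipP : is_inner_product ip) (adj : is_adjoint ip A Ad).
Hypotheses (M0 : 0 <= M) (AM : forall x, ipnorm ip (A x) <= M * ipnorm ip x).

Let value t x :=
  complex.Re `|ip ((phi t)%:C *: A x + (psi t)%:C *: Ad x) x|.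

Let valueE t x : value t x =
  complex.Re `|(phi t)%:C * ip (A x) x + (psi t)%:C * (ip (A x) x)^*|.
Proof. by rewrite /value ip_adjoint_combination. Qed.

Let value_ubound t : has_ubound (value t @` unit_sphere ip).
Proof.
exists ((`|phi t| + `|psi t|) * M) => _ [x x1 <-].
rewrite valueE; apply: Re_normr_combination_conj_le.
exact: ip_unit_le (AM x).
Qed.

Let value_lbound t : has_lbound (value t @` unit_sphere ip).
Proof. by exists 0 => _ [x _ <-]; exact: Re_normr_ge0. Qed.

Let value_dist t s x : unit_sphere ip x ->
  `|value t x - value s x| <= (`|phi t - phi s| + `|psi t - psi s|) * M.
Proof.
move=> x1; rewrite !valueE; apply: Re_normr_combination_conj_dist.
exact: ip_unit_le (AM x).
Qed.

Lemma omega_t_dist t s :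
  `|omega_t ip phi psi A Ad t - omega_t ip phi psi A Ad s|
    <= (`|phi t - phi s| + `|psi t - psi s|) * M.
Proof.
apply: sup_image_dist; [by rewrite mulr_ge0 ?addr_ge0 | exact: value_ubound..|].
exact: value_dist.
Qed.

Lemma c_t_dist t s :
  `|c_t ip phi psi A Ad t - c_t ip phi psi A Ad s|
    <= (`|phi t - phi s| + `|psi t - psi s|) * M.
Proof.
apply: inf_image_dist; [by rewrite mulr_ge0 ?addr_ge0 | exact: value_lbound..|].
exact: value_dist.
Qed.

End NumericalRangeValues.

Theorem theorem2p7 (R : realType) (V : lmodType R[i]) (ip : V -> V -> R[i])
    (phi psi : R -> R) (A Ad : V -> V) :
  is_hilbert ip ->
  {within `[0, 1], continuous phi} ->
  {within `[0, 1], continuous psi} ->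
  bounded_op ip A ->
  is_adjoint ip A Ad ->
  {within `[0, 1], continuous (omega_t ip phi psi A Ad)} /\
  {within `[0, 1], continuous (c_t ip phi psi A Ad)}.
Proof.
move=> [ipP _] cphi cpsi /bounded_op_nonneg[M M0 AM] adj.
split; apply: (continuous_within_dist_le M0 _ cphi cpsi) => t s.
- exact: omega_t_dist.
- exact: c_t_dist.
Qed.
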